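(* Let $(X,\tau)$ be a Hausdorff extended locally convex space having a countable neighborhood base at $0_X$, with finest locally convex topology $\tau_F$, and let $\|\cdot\|$ be a norm on $X$ such that the linear functionals on $X$ continuous with respect to $\|\cdot\|$ are exactly the $\tau$-continuous linear functionals, i.e. $(X,\|\cdot\|)^*=(X,\tau)^*$. Then $\tau_F$ is the topology induced by the norm $\|\cdot\|$.
   Context: An extended seminorm on a vector space $X$ over $\mathbb{R}$ or $\mathbb{C}$ is a map $\rho:X\to[0,\infty]$ with $\rho(\alpha x)=|\alpha|\rho(x)$ and $\rho(x+y)\le\rho(x)+\rho(y)$. An extended locally convex space $(X,\tau)$ is a vector space with the topology induced by a family $\{\rho_i\}$ of extended seminorms (neighborhood base at $x_0$: $\{x:\max_{i\in J}\rho_i(x-x_0)<\varepsilon\}$, $J$ finite, $\varepsilon>0$). A locally convex topology is one induced in this way by finite-valued seminorms. The finest locally convex topology of $(X,\tau)$ is the locally convex topology $\tau_F\subseteq\tau$ such that every locally convex topology $\sigma\subseteq\tau$ on $X$ satisfies $\sigma\subseteq\tau_F$. *)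

From HB Require Import structures.
From mathcomp Require Import all_boot all_order all_algebra.
From mathcomp Require Import boolp classical_sets cardinality reals constructive_ereal.
From mathcomp Require Export complex.
Set Implicit Arguments. Unset Strict Implicit. Unset Printing Implicit Defensive.
Import Order.TTheory GRing.Theory Num.Theory.
Local Open Scope classical_set_scope.
Local Open Scope ring_scope.

(* Scalars: a field K with an absolute value [sabs : K -> R] into the reals.
   Used with K = R, sabs = normr, and with K = R[i], sabs = complex modulus. *)
Section ELCS.
Context {R : realType} {K : fieldType} (sabs : K -> R) {X : lmodType K}.

Definition ext_seminorm (rho : X -> \bar R) : Prop :=
  [/\ forall x : X, (0 <= rho x)%E,
      forall (a : K) (x : X), rho (a *: x) = ((sabs a)%:E * rho x)%E &
      forall x y : X, (rho (x + y)%R <= rho x + rho y)%E].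

Definition family_topology (I : Type) (rho : I -> X -> \bar R) : set (set X) :=
  [set U : set X | forall x0 : X, U x0 ->
     exists (J : set I) (eps : R), [/\ finite_set J, 0 < eps &
       [set x : X | forall i, J i -> (rho i (x - x0)%R < eps%:E)%E] `<=` U]].

Definition lc_topology (sigma : set (set X)) : Prop :=
  exists (I : Type) (rho : I -> X -> \bar R),
    [/\ forall i, ext_seminorm (rho i),
        forall i x, (rho i x < +oo)%E &
        sigma = family_topology rho].

Definition finest_lc_topology (tau tauF : set (set X)) : Prop :=
  [/\ lc_topology tauF, tauF `<=` tau &
      forall sigma, lc_topology sigma -> sigma `<=` tau -> sigma `<=` tauF].

Definition hausdorff_topology (tau : set (set X)) : Prop :=
  forall x y : X, x <> y ->
    exists U V, [/\ tau U, tau V, U x, V y & U `&` V = set0].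

Definition nbhd_of (tau : set (set X)) (x : X) (N : set X) : Prop :=
  exists U, [/\ tau U, U x & U `<=` N].

Definition countable_nbhd_base_at0 (tau : set (set X)) : Prop :=
  exists B : nat -> set X,
    (forall n, nbhd_of tau 0 (B n)) /\
    (forall N, nbhd_of tau 0 N -> exists n, B n `<=` N).

Definition is_norm (nrm : X -> R) : Prop :=
  [/\ forall x, 0 <= nrm x,
      forall x, nrm x = 0 -> x = 0,
      forall (a : K) x, nrm (a *: x) = sabs a * nrm x &
      forall x y, nrm (x + y) <= nrm x + nrm y].

Definition norm_topology (nrm : X -> R) : set (set X) :=
  [set U : set X | forall x0 : X, U x0 ->
     exists eps : R, 0 < eps /\ [set x | nrm (x - x0) < eps] `<=` U].

Definition linear_functional (f : X -> K) : Prop :=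
  forall (a : K) (x y : X), f (a *: x + y) = a * f x + f y.

Definition continuous_wrt (tau : set (set X)) (f : X -> K) : Prop :=
  forall (x0 : X) (eps : R), 0 < eps ->
    exists U, [/\ tau U, U x0 & forall x, U x -> sabs (f x - f x0) < eps].

End ELCS.

Definition cabs {R : realType} (z : R[i]) : R := ComplexField.Normc.normc z.

From HB Require Import structures.
From mathcomp Require Import all_boot all_order all_algebra.
From mathcomp Require Import boolp classical_sets cardinality reals constructive_ereal.
From mathcomp Require Import complex.
From mathcomp Require Import lra ring.
From mathcomp Require Import topology normedtype sequences.
Set Implicit Arguments.
Unset Strict Implicit.
Unset Printing Implicit Defensive.
Import Order.TTheory GRing.Theory Num.Theory.
Import numFieldNormedType.Exports.
Local Open Scope classical_set_scope.
Local Open Scope ring_scope.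

(* The norm topology is locally convex, so it lies below tauF as soon as nrm
   is tau-continuous at 0; conversely tauF lies below it as soon as every
   seminorm s defining tauF is bounded by a multiple of nrm.  Both facts follow
   from one principle: in a seminormed space (X, p), a sequence along which
   every functional dominated by p is bounded is itself p-bounded (a gliding
   hump built from Hahn-Banach functionals).  It is applied to a sequence
   tending to 0 in tau along which nrm is unbounded, resp. to a sequence on the
   unit sphere of nrm along which s is unbounded: by the equality of the duals,
   every functional dominated by nrm, resp. by s, is continuous for both tau
   and nrm, hence bounded along the sequence. *)

Section LinearFunctional.
Variables (K : fieldType) (X : lmodType K) (f : X -> K).
Hypothesis lf : linear_functional f.

Lemma linear_functional0 : f 0 = 0.
Proof.
have := lf 1 0 0; rewrite scale1r addr0 mul1r => e.
by apply: (addrI (f 0)); rewrite addr0 -e.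
Qed.

Lemma linear_functionalD x y : f (x + y) = f x + f y.
Proof. by rewrite -{1}(scale1r x) lf mul1r. Qed.

Lemma linear_functionalZ a x : f (a *: x) = a * f x.
Proof. by rewrite -[a *: x]addr0 lf linear_functional0 addr0. Qed.

Lemma linear_functionalN x : f (- x) = - f x.
Proof. by rewrite -scaleN1r linear_functionalZ mulN1r. Qed.

Lemma linear_functionalB x y : f (x - y) = f x - f y.
Proof. by rewrite linear_functionalD linear_functionalN. Qed.

End LinearFunctional.

Section HahnBanach.
Variables (R : realType) (V : lmodType R) (q : V -> R).
Hypotheses (qZ : forall (a : R) x, 0 <= a -> q (a *: x) = a * q x)
  (qD : forall x y, q (x + y) <= q x + q y).

Definition dominated_linear_graph (G : set (V * R)) :=
  [/\ forall x r s, G (x, r) -> G (x, s) -> r = s,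
      forall a x y r s, G (x, r) -> G (y, s) -> G (a *: x + y, a * r + s) &
      forall x r, G (x, r) -> r <= q x].

Local Notation dlg := dominated_linear_graph.

Lemma sublinear0 : q 0 = 0.
Proof. by rewrite -(scale0r 0) qZ // mul0r. Qed.

Lemma sublinear_ge (a : R) x : a * q x <= q (a *: x).
Proof.
have [a0|a0] := leP 0 a; first by rewrite qZ.
have h := qD (a *: x) ((- a) *: x).
rewrite -scalerDl subrr scale0r sublinear0 [q (- a *: x)]qZ ?oppr_ge0 ?(ltW a0) // in h.
lra.
Qed.

Lemma scale_inv_sublinear s x v : 0 < s -> s * q (s^-1 *: x + v) = q (x + s *: v).
Proof. by move=> s0; rewrite -qZ ?ltW // scalerDr scalerA mulfV ?gt_eqF // scale1r. Qed.

Lemma dlg_directed G :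
  (forall p p', G p -> G p' -> exists H, [/\ dlg H, H `<=` G, H p & H p']) ->
  dlg G.
Proof.
move=> dir; split.
- move=> x r s Gr Gs; have [H [[fH _ _] _ Hr Hs]] := dir _ _ Gr Gs.
  exact: fH Hr Hs.
- move=> a x y r s Gr Gs; have [H [[_ lH _] HG Hr Hs]] := dir _ _ Gr Gs.
  exact/HG/lH.
- by move=> x r Gr; have [H [[_ _ dH] _ Hr _]] := dir _ _ Gr Gr; exact: dH Hr.
Qed.

Section Extension.
Variables (G : set (V * R)) (y : V).
Hypotheses (dlgG : dlg G) (G00 : G (0, 0)).

Lemma dlgZ a x r : G (x, r) -> G (a *: x, a * r).
Proof. by case: dlgG => _ lG _ Gr; have := lG a _ _ _ _ Gr G00; rewrite !addr0. Qed.

Lemma dlgD x x' r r' : G (x, r) -> G (x', r') -> G (x + x', r + r').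
Proof.
by case: dlgG => _ lG _ Gr Gr'; have := lG 1 _ _ _ _ Gr Gr'; rewrite scale1r mul1r.
Qed.

Lemma dlg_extension_constant : exists c, forall x r, G (x, r) ->
  r - q (x - y) <= c /\ c <= q (x + y) - r.
Proof.
case: dlgG => _ _ dG.
pose S := [set v | exists x r, G (x, r) /\ v = r - q (x - y)].
have Sub x' r' : G (x', r') -> ubound S (q (x' + y) - r').
  move=> Gr' _ [x [r [Gr ->]]].
  have := dG _ _ (dlgD Gr Gr'); have := qD (x - y) (x' + y).
  by rewrite addrA addrAC subrK; lra.
have supS : has_sup S.
  by split; [exists (0 - q (0 - y)), 0, 0|exists (q (0 + y) - 0); exact: Sub].
exists (sup S) => x r Gr; split; first by apply: ub_le_sup; [case: supS|exists x, r].
by apply: ge_sup; [case: supS|exact: Sub].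
Qed.

Definition graph_extension (c : R) :=
  [set p | exists x r t, G (x, r) /\ p = (x + t *: y, r + t * c)].

Lemma graph_extension_sub c : G `<=` graph_extension c.
Proof. by move=> [x r] Gr; exists x, r, 0; rewrite scale0r mul0r !addr0. Qed.

Lemma graph_extension_y c : graph_extension c (y, c).
Proof. by exists 0, 0, 1; rewrite scale1r mul1r !add0r. Qed.

Hypothesis y_notin_dom : forall r, ~ G (y, r).

Lemma dlg_graph_extension c :
  (forall x r, G (x, r) -> r - q (x - y) <= c /\ c <= q (x + y) - r) ->
  dlg (graph_extension c).
Proof.
case: dlgG => fG lG dG cB; split.
- move=> _ _ _ [x1 [r1 [t1 [Gr1 [-> ->]]]]] [x2 [r2 [t2 [Gr2 [+ ->]]]]].
  have [<- /addIr ex|t12 ex] := eqVneq t1 t2.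
    by rewrite ex in Gr1; rewrite (fG _ _ _ Gr1 Gr2).
  have ey : (t1 - t2)^-1 *: (x2 - x1) = y.
    apply: (scalerI (a := t1 - t2)); first by rewrite subr_eq0.
    rewrite scalerA mulfV ?subr_eq0 // scale1r scalerBl.
    rewrite -[x2](addrK (t2 *: y)) -ex (addrAC _ (- _) (- x1)) [x1 + _]addrC.
    by rewrite addrK.
  exfalso; apply: (y_notin_dom (r := (t1 - t2)^-1 * (r2 - r1))); rewrite -ey.
  apply: dlgZ; apply: dlgD => //.
  by have := dlgZ (-1) Gr1; rewrite scaleN1r mulN1r.
- move=> a _ _ _ _ [x1 [r1 [t1 [Gr1 [-> ->]]]]] [x2 [r2 [t2 [Gr2 [-> ->]]]]].
  exists (a *: x1 + x2), (a * r1 + r2), (a * t1 + t2); split; first exact: lG.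
  by congr pair; rewrite ?scalerDr ?scalerA ?scalerDl ?mulrDr ?mulrA ?mulrDl addrACA.
- move=> _ _ [x [r [t [Gr [-> ->]]]]].
  have [t0|t0|->] := ltgtP t 0; last by rewrite scale0r mul0r !addr0; exact: dG.
  + have nt0 : 0 < - t by rewrite oppr_gt0.
    have /cB[h _] := dlgZ (- t)^-1 Gr.
    have e : - t * q ((- t)^-1 *: x - y) = q (x + t *: y).
      by rewrite scale_inv_sublinear // scalerN scaleNr opprK.
    rewrite -(ler_pM2l nt0) mulrBr mulrA mulfV ?gt_eqF // mul1r e in h.
    by nra.
  + have /cB[_ h] := dlgZ t^-1 Gr.
    rewrite -(ler_pM2l t0) mulrBr mulrA mulfV ?gt_eqF // mul1r scale_inv_sublinear // in h.
    by nra.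
Qed.
End Extension.

Lemma dlg_total G : dlg G -> G (0, 0) ->
  (forall H, dlg H -> G `<=` H -> H `<=` G) -> forall y, exists r, G (y, r).
Proof.
move=> dG G00 Gmax y; apply: contrapT => /forallNP yG.
have [c cB] := dlg_extension_constant y dG G00.
have := Gmax _ (dlg_graph_extension dG G00 yG cB) (@graph_extension_sub _ y c).
by move=> /(_ _ (graph_extension_y y G00 c)) /yG.
Qed.

Theorem hahn_banach x0 :
  exists u, [/\ linear_functional u, forall x, u x <= q x & u x0 = q x0].
Proof.
pose G0 := [set (t *: x0, t * q x0) | t in [set: R]].
have dG0 : dlg G0.
  split.
  - move=> _ _ _ [t _ [<- <-]] [t' _ [ett' <-]].
    have [->//|ne] := eqVneq t t'.
    have x00 : x0 = 0.
      apply: (scalerI (a := t - t')); first by rewrite subr_eq0.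
      by rewrite scalerBl ett' subrr scaler0.
    by rewrite x00 sublinear0 !mulr0.
  - move=> a _ _ _ _ [t _ [<- <-]] [t' _ [<- <-]]; exists (a * t + t') => //.
    by rewrite scalerDl scalerA mulrDl mulrA.
  - by move=> _ _ [t _ [<- <-]]; exact: sublinear_ge.
have [A [dA Amax]] : exists A, dlg (G0 `|` A) /\ forall B, A `<` B -> ~ dlg (G0 `|` B).
  apply: Zorn_bigcup => F Fdlg Ftot.
  have [->|/set0P[A0 FA0]] := eqVneq F set0; first by rewrite bigcup_set0 setU0.
  have member p : (G0 `|` \bigcup_(X in F) X) p -> exists2 A, F A & (G0 `|` A) p.
    by case=> [G0p|[A FA Ap]]; [exists A0 => //; left|exists A => //; right].
  have below A : F A -> G0 `|` A `<=` G0 `|` \bigcup_(X in F) X.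
    by move=> FA; apply: setUS; exact: bigcup_sup.
  apply: dlg_directed => p p' /member[A FA Ap] /member[A' FA' A'p'].
  have [AA'|A'A] := Ftot _ _ FA FA'.
  - by exists (G0 `|` A'); split; [exact: Fdlg|exact: below|exact: setUS AA' _ Ap|].
  - by exists (G0 `|` A); split; [exact: Fdlg|exact: below| |exact: setUS A'A _ A'p'].
pose G := G0 `|` A.
have G00 : G (0, 0) by left; exists 0; rewrite ?scale0r ?mul0r.
have Gmax H : dlg H -> G `<=` H -> H `<=` G.
  move=> dH GH; apply: contrapT => HG.
  apply: (Amax H); last by rewrite (setUidr (subset_trans (@subsetUl _ G0 A) GH)).
  split=> [p Ap|HA]; first by apply: GH; right.
  by apply: HG => p /HA; right.
have [u Gu] := choice (dlg_total dA G00 Gmax).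
case: dA => fG lG dG; exists u; split.
- by move=> a x y; apply: fG (Gu _) _; apply: lG.
- by move=> x; exact: dG (Gu x).
- by apply: fG (Gu x0) _; left; exists 1; rewrite ?scale1r ?mul1r.
Qed.

End HahnBanach.

Lemma lim_dist_le (R : realType) (s : R ^nat) (a b : R) (N0 : nat) : cvgn s ->
  (forall N, (N0 <= N)%N -> `|s N - a| <= b) -> `|limn s - a| <= b.
Proof.
move=> cs sb; rewrite ler_norml; apply/andP; split.
  rewrite lerBrDr; apply: limr_ge => //; exists N0 => // N /= /sb.
  by rewrite ler_norml => /andP[? _]; lra.
rewrite lerBlDr; apply: limr_le => //; exists N0 => // N /= /sb.
by rewrite ler_norml => /andP[_ ?]; lra.
Qed.

Section GlidingHump.
Variables (R : realType) (V : lmodType R) (q : V -> R).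
Hypotheses (qZ : forall (a : R) x, q (a *: x) = `|a| * q x)
  (qD : forall x y, q (x + y) <= q x + q y).

Lemma seminorm_ge0 x : 0 <= q x.
Proof.
have := qD x (- x); rewrite subrr -scaleN1r qZ normrN1 mul1r.
by rewrite -(scale0r 0) qZ normr0 mul0r; lra.
Qed.

Lemma hahn_banach_seminorm x0 :
  exists u, [/\ linear_functional u, forall x, `|u x| <= q x & u x0 = q x0].
Proof.
have qZ' (a : R) x : 0 <= a -> q (a *: x) = a * q x by move=> a0; rewrite qZ ger0_norm.
have [u [lu uq ux0]] := hahn_banach qZ' qD x0.
exists u; split => // x; rewrite ler_norml uq andbT lerNl.
by rewrite -linear_functionalN // -[q x]mul1r -normrN1 -qZ scaleN1r uq.
Qed.

(* weights of total mass 1 whose tail after c j is c j / 2 *)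
Local Notation c k := (2 / 3 ^+ k.+1 : R).

Lemma hump_weight_gt0 k : 0 < c k.
Proof. by rewrite divr_gt0 // exprn_gt0. Qed.

Lemma sum_hump_weight N : \sum_(k < N) c k = 1 - (3 ^+ N)^-1.
Proof.
elim: N => [|N IH]; first by rewrite big_ord0 expr0 invr1 subrr.
rewrite big_ord_recr /= IH exprS; field.
by rewrite expf_neq0 // pnatr_eq0.
Qed.

Section HumpSum.
Variable u : nat -> V -> R.
Hypotheses (lu : forall k, linear_functional (u k)) (uq : forall k x, `|u k x| <= q x).

Definition hump_series x : R ^nat := series (fun k => c k * u k x).

Definition hump_sum x : R := limn (hump_series x).

Lemma hump_series_dist x j N : (j <= N)%N ->
  `|hump_series x N - hump_series x j| <= (3 ^+ j)^-1 * q x.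
Proof.
move=> jN; rewrite /hump_series !seriesEnat /= (big_cat_nat (leq0n j) jN) /=.
rewrite addrAC subrr add0r.
apply: (le_trans (ler_norm_sum _ _ _)).
apply: (@le_trans _ _ (\sum_(j <= k < N) c k * q x)).
  apply: ler_sum => k _.
  by rewrite normrM (gtr0_norm (hump_weight_gt0 k)) ler_pM2l ?hump_weight_gt0.
have: \sum_(0 <= k < N) c k = \sum_(0 <= k < j) c k + \sum_(j <= k < N) c k.
  exact: big_cat_nat (leq0n j) jN.
rewrite -mulr_suml !big_mkord !sum_hump_weight => e.
have := seminorm_ge0 x; have : 0 <= (3 ^+ N)^-1 :> R by rewrite invr_ge0 exprn_ge0.
nra.
Qed.

Lemma cvg_hump_series x : cvgn (hump_series x).
Proof.
apply: (@normed_cvg _ R^o); apply: (@series_le_cvg _ _ (geometric (2 / 3 * q x) (3^-1))).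
- by move=> k; rewrite normr_ge0.
- by move=> k; rewrite /geometric /= mulr_ge0 ?exprn_ge0 ?mulr_ge0 ?invr_ge0 ?seminorm_ge0.
- move=> k; rewrite /geometric /= normrM (gtr0_norm (hump_weight_gt0 k)).
  have -> : 2 / 3 * q x * 3^-1 ^+ k = c k * q x.
    by rewrite exprS exprVn; field; rewrite expf_neq0 // pnatr_eq0.
  by rewrite ler_pM2l ?hump_weight_gt0.
- by apply: is_cvg_geometric_series; rewrite ger0_norm ?invr_ge0 // invf_lt1 // ltr1n.
Qed.

Lemma hump_sum_dist x j : `|hump_sum x - hump_series x j| <= (3 ^+ j)^-1 * q x.
Proof.
rewrite /hump_sum; apply: (lim_dist_le (@cvg_hump_series x)) => N.
exact: hump_series_dist.
Qed.

Lemma hump_sum_le x : `|hump_sum x| <= q x.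
Proof.
have := hump_sum_dist x 0.
by rewrite /hump_series seriesEord /= big_ord0 subr0 expr0 invr1 mul1r.
Qed.

Lemma linear_hump_sum : linear_functional hump_sum.
Proof.
move=> a x y; rewrite /hump_sum.
have -> : hump_series (a *: x + y) = (fun n => a * hump_series x n + hump_series y n).
  apply/funext => n; rewrite /hump_series !seriesEord /= mulr_sumr -big_split /=.
  by apply: eq_bigr => k _; rewrite lu; ring.
by apply: cvg_lim => //; apply: cvgD; [apply: cvgMl_tmp|]; exact: cvg_hump_series.
Qed.

End HumpSum.

Theorem weakly_bounded_seminorm_bounded (z : nat -> V) :
  (forall u, linear_functional u -> (forall x, `|u x| <= q x) ->
     exists M, forall n, `|u (z n)| <= M) ->
  exists M, forall n, q (z n) <= M.
Proof.
move=> wb; apply: contrapT => /forallNP unb.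
have big M : exists n, M < q (z n).
  by have /existsNP[n /negP] := unb M; rewrite -ltNge; exists n.
have [nf nfP] := choice big.
have [hb hbP] := choice hahn_banach_seminorm.
have bounded u : exists M, linear_functional u -> (forall x, `|u x| <= q x) ->
    forall n, `|u (z n)| <= M.
  have [[lu uq]|nu] := pselect (linear_functional u /\ forall x, `|u x| <= q x).
    by have [M uM] := wb u lu uq; exists M.
  by exists 0 => lu uq; case: nu.
have [bnd bndP] := choice bounded.
(* n_ k makes the k-th hump c k * q (z (n_ k (S k))) at least 2 (k + 1 + S k):
   half of it dominates the tail, the other half exceeds the earlier terms
   (at most S k) by k + 1. *)
pose n_ k (s : R) := nf ((k.+1%:R + s) * 3 ^+ k.+1).
pose S := fix S k := if k is k'.+1 then S k' + c k' * bnd (hb (z (n_ k' (S k')))) else 0.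
pose u k := hb (z (n_ k (S k))).
have lu k : linear_functional (u k) by case: (hbP (z (n_ k (S k)))).
have uq k x : `|u k x| <= q x by case: (hbP (z (n_ k (S k)))) => _ + _; apply.
have unorm k : u k (z (n_ k (S k))) = q (z (n_ k (S k))) by case: (hbP (z (n_ k (S k)))).
have [M WM] := wb _ (linear_hump_sum lu uq) (hump_sum_le uq).
have [j Mj] : exists j : nat, M < j.+1%:R by exists (Num.truncn M); exact: truncnS_gt.
pose y := z (n_ j (S j)); pose A := (3 ^+ j.+1)^-1 * q y.
have A_big : j.+1%:R + S j < A.
  by rewrite /A mulrC ltr_pdivlMr ?exprn_gt0 //; exact: nfP.
have head_le : `|hump_series u y j| <= S j.
  elim: (j) => [|k IH]; first by rewrite /hump_series seriesEord /= big_ord0 normr0.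
  rewrite /hump_series seriesSr /= -/(hump_series u y k).
  apply: (le_trans (ler_normD _ _)); apply: lerD => //.
  by rewrite normrM (gtr0_norm (hump_weight_gt0 k)) ler_pM2l ?hump_weight_gt0 ?bndP.
have hump_j : hump_series u y j.+1 = hump_series u y j + 2 * A.
  by rewrite /hump_series seriesSr /= unorm /A exprS; field; rewrite expf_neq0 ?pnatr_eq0.
have := hump_sum_dist uq y j.+1; rewrite hump_j -/A => tail.
have := WM (n_ j (S j)); rewrite -/y => Wy.
move: tail head_le Wy; rewrite !ler_norml => /andP[t1 t2] /andP[h1 h2] /andP[w1 w2].
lra.
Qed.

End GlidingHump.

Section RestrictScalars.
Variables (R K : pzRingType) (emb : {rmorphism R -> K}) (X : lmodType K).

(* The dummy argument makes the carrier, hence its canonical R-module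
   structure, depend on the embedding. *)
Definition restrict_scalars (e : R -> K) : Type := X.
Local Notation RX := (restrict_scalars emb).

HB.instance Definition _ := GRing.Zmodule.on RX.

Definition restricted_scale (r : R) (x : RX) : RX := emb r *: (x : X).

Lemma restricted_scaleA a b x :
  restricted_scale a (restricted_scale b x) = restricted_scale (a * b) x.
Proof. by rewrite /restricted_scale scalerA rmorphM. Qed.

Lemma restricted_scale1 : left_id 1 restricted_scale.
Proof. by move=> x; rewrite /restricted_scale rmorph1 scale1r. Qed.

Lemma restricted_scaleDr : right_distributive restricted_scale +%R.
Proof. by move=> a x y; rewrite /restricted_scale scalerDr. Qed.

Lemma restricted_scaleDl x : {morph restricted_scale^~ x : a b / a + b}.
Proof. by move=> a b; rewrite /restricted_scale rmorphD scalerDl. Qed.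

HB.instance Definition _ := GRing.Zmodule_isLmodule.Build R RX
  restricted_scaleA restricted_scale1 restricted_scaleDr restricted_scaleDl.

Lemma restrict_scalarsE (r : R) (x : RX) : r *: x = (emb r *: (x : X) : X).
Proof. by []. Qed.

End RestrictScalars.

(* The only property of the scalars R or R[i] used beyond the absolute value:
   a real functional dominated by a seminorm is dominated by (the absolute
   value of) a K-linear functional that is itself dominated. *)
Definition lifts_real_functionals (R : realType) (K : fieldType) (sabs : K -> R)
    (emb : {rmorphism R -> K}) :=
  forall (X : lmodType K) (p : X -> R) (u : restrict_scalars X emb -> R),
    (forall a x, p (a *: x) = sabs a * p x) ->
    linear_functional u -> (forall x, `|u x| <= p x) ->
  exists g : X -> K, [/\ linear_functional g, forall x, sabs (g x) <= p x &
    forall x, `|u x| <= sabs (g x)].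

Lemma real_lifts_real_functionals (R : realType) :
  lifts_real_functionals (@Num.norm R R) idfun.
Proof. by move=> X p u _ lu up; exists u. Qed.

Section Complexify.
Local Open Scope complex_scope.
Variables (R : realType) (X : lmodType R[i]).
Variable u : restrict_scalars X (real_complex R) -> R.
Hypothesis lu : linear_functional u.

Definition complexify (x : X) : R[i] := u x +i* (- u ('i *: x)).

Let uD (x y : X) : u (x + y) = u x + u y := linear_functionalD lu x y.

Let uZ (r : R) (x : X) : u (r%:C *: x) = r * u x := linear_functionalZ lu r x.

Lemma complexify_scaleE a b (x : X) :
  u ((a +i* b) *: x : X) = a * u x + b * u ('i *: x : X).
Proof.
have -> : a +i* b = a%:C + b%:C * 'i.
  by apply/eqP; rewrite eq_complex /= !(mulr0, mul0r, mulr1, subr0, addr0, add0r, eqxx).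
by rewrite scalerDl -scalerA uD !uZ.
Qed.

Lemma linear_complexify : linear_functional complexify.
Proof.
have iE (a b : R) : 'i * (a +i* b) = - b +i* a.
  by apply/eqP; rewrite eq_complex /= !(mul0r, mul1r, sub0r, add0r, eqxx).
move=> [a b] x y; rewrite /complexify; apply/eqP; rewrite eq_complex /=.
rewrite scalerDr scalerA iE !uD (complexify_scaleE a) (complexify_scaleE (- b)).
by apply/andP; split; apply/eqP; lra.
Qed.

Lemma complexify_dominated (p : X -> R) :
  (forall a x, p (a *: x) = cabs a * p x) -> (forall x, `|u x| <= p x) ->
  forall x, cabs (complexify x) <= p x.
Proof.
move=> pZ up x; set a := u x; set b := u ('i *: x).
have gE : cabs (complexify x) = Num.sqrt (a ^+ 2 + b ^+ 2) by rewrite /cabs /= sqrrN.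
have g0 : 0 <= cabs (complexify x) by rewrite gE sqrtr_ge0.
have g2 : cabs (complexify x) ^+ 2 = a ^+ 2 + b ^+ 2.
  by rewrite gE sqr_sqrtr // addr_ge0 // sqr_ge0.
have key : cabs (complexify x) ^+ 2 <= cabs (complexify x) * p x.
  have := up ((a +i* b) *: x); rewrite complexify_scaleE pZ -!expr2 -g2.
  have -> : cabs (a +i* b) = cabs (complexify x) by rewrite gE.
  exact: le_trans (ler_norm _).
have [->|gn0] := eqVneq (cabs (complexify x)) 0.
  exact: le_trans (normr_ge0 (u x)) (up x).
have gpos : 0 < cabs (complexify x) by rewrite lt_def gn0 g0.
by rewrite -(ler_pM2l gpos) -expr2.
Qed.

Lemma abs_le_cabs_complexify x : `|u x| <= cabs (complexify x).
Proof.
rewrite /cabs /= -sqrtr_sqr ler_sqrt ?addr_ge0 ?sqr_ge0 // lerDl sqr_ge0 //.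
Qed.
End Complexify.

Lemma complex_lifts_real_functionals (R : realType) :
  lifts_real_functionals (@cabs R) (real_complex R).
Proof.
move=> X p u pZ lu up; exists (complexify u); split.
- exact: linear_complexify.
- exact: complexify_dominated.
- exact: abs_le_cabs_complexify.
Qed.

Lemma finite_set_ubound (T : Type) (R : realType) (J : set T) (C : T -> R) :
  finite_set J -> exists M, forall j, J j -> C j <= M.
Proof.
move=> /(@finite_fsetP {classic T})[F ->].
exists (\sum_(j <- finmap.enum_fset F) `|C j|) => j jF.
rewrite (big_rem (j : {classic T}) jF) /=; apply: le_trans (ler_norm _) _.
by rewrite lerDl sumr_ge0.
Qed.

Lemma natS_le_unbounded (R : realType) (f : nat -> R) :
  (forall n, n.+1%:R <= f n) -> ~ exists M, forall n, f n <= M.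
Proof.
move=> fn [M fM]; have := le_trans (fn (Num.truncn M)) (fM _).
by rewrite leNgt truncnS_gt.
Qed.

Lemma eventually_bounded (R : realType) (f : nat -> R) (m : nat) (B : R) :
  (forall n, (m <= n)%N -> f n <= B) -> exists M, forall n, f n <= M.
Proof.
move=> fB; exists (`|B| + \sum_(k < m) `|f k|) => n.
have [/fB fnB|nm] := leqP m n.
  by apply: le_trans fnB (le_trans (ler_norm B) _); rewrite lerDl sumr_ge0.
apply: le_trans (ler_norm _) _.
by rewrite (bigD1 (Ordinal nm)) //= addrCA lerDl addr_ge0 // sumr_ge0.
Qed.

Section Scalars.
Variables (R : realType) (K : fieldType) (sabs : K -> R) (emb : {rmorphism R -> K}).
Hypotheses (sabs_emb : forall r, sabs (emb r) = `|r|)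
  (sabsM : forall a b, sabs (a * b) = sabs a * sabs b)
  (lift : lifts_real_functionals sabs emb).

Section Space.
Variable X : lmodType K.

Lemma abs_homogeneous0 (p : X -> R) :
  (forall a x, p (a *: x) = sabs a * p x) -> p 0 = 0.
Proof. by move=> pZ; rewrite -(scale0r 0) pZ -(rmorph0 emb) sabs_emb normr0 mul0r. Qed.

Lemma continuous_wrtS (T T' : set (set X)) (g : X -> K) :
  T `<=` T' -> continuous_wrt sabs T g -> continuous_wrt sabs T' g.
Proof.
move=> TT' cg x0 eps e0; have [U [TU Ux0 HU]] := cg x0 eps e0.
by exists U; split => //; exact: TT'.
Qed.

Lemma dominated_continuous (T : set (set X)) (p : X -> R) (g : X -> K) :
  linear_functional g -> p 0 = 0 -> (forall x0 r, T [set x | p (x - x0) < r]) ->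
  (forall x, sabs (g x) <= p x) -> continuous_wrt sabs T g.
Proof.
move=> lg p0 pT gp x0 eps e0; exists [set x | p (x - x0) < eps]; split => //.
- by rewrite /= subrr p0.
- by move=> x /= px; rewrite -(linear_functionalB lg); exact: le_lt_trans (gp _) px.
Qed.

Lemma norm_topology_ball (p : X -> R) : (forall x y, p (x + y) <= p x + p y) ->
  forall x0 r, norm_topology p [set x | p (x - x0) < r].
Proof.
move=> pD x0 r x1 /= px1; exists (r - p (x1 - x0)); split; first by rewrite subr_gt0.
move=> x /= px; have := pD (x - x1) (x1 - x0); rewrite addrA subrK; lra.
Qed.

Lemma family_topology_ball (J : Type) (sig : J -> X -> \bar R) j (s : X -> R) :
  (forall x, sig j x = (s x)%:E) -> (forall x y, s (x + y) <= s x + s y) ->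
  forall x0 r, family_topology sig [set x | s (x - x0) < r].
Proof.
move=> sE sD x0 r x1 /= sx1; exists [set j], (r - s (x1 - x0)); split.
- exact: finite_set1.
- by rewrite subr_gt0.
move=> x /= /(_ j erefl); rewrite sE lte_fin => sx.
have := sD (x - x1) (x1 - x0); rewrite addrA subrK; lra.
Qed.

Lemma lc_norm_topology (p : X -> R) :
  (forall x, 0 <= p x) -> (forall a x, p (a *: x) = sabs a * p x) ->
  (forall x y, p (x + y) <= p x + p y) -> lc_topology sabs (norm_topology p).
Proof.
move=> p0 pZ pD; exists unit, (fun _ x => (p x)%:E); split.
- by move=> _; split=> [x|a x|x y]; rewrite ?lee_fin ?pZ ?EFinM.
- by move=> _ x; exact: ltry.
apply/seteqP; split => U pU x0 /pU.
  by move=> [eps [e0 sub]]; exists [set tt], eps; split => // x /(_ tt erefl); exact: sub.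
by move=> [J [eps [_ e0 sub]]]; exists eps; split => // x px; apply: sub => i _.
Qed.

Lemma continuous_bounded (p : X -> R) (g : X -> K) :
  (forall a x, p (a *: x) = sabs a * p x) -> linear_functional g ->
  continuous_wrt sabs (norm_topology p) g ->
  exists C, forall x, p x <= 1 -> sabs (g x) <= C.
Proof.
move=> pZ lg /(_ 0 1 ltr01)[U [pU /pU[d [d0 sub]] gU]].
exists (2 / d) => x px1; have d2 : 0 < d / 2 by rewrite divr_gt0.
have : U (emb (d / 2) *: x).
  by apply: sub; rewrite /= subr0 pZ sabs_emb gtr0_norm //; nra.
move=> /gU; rewrite linear_functional0 // subr0 (linear_functionalZ lg).
rewrite sabsM sabs_emb gtr0_norm // => /ltW gx.
by rewrite -invf_div -(ler_pM2l d2) mulfV ?gt_eqF.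
Qed.

Lemma weakly_bounded_bounded (p : X -> R) (z : nat -> X) :
  (forall a x, p (a *: x) = sabs a * p x) -> (forall x y, p (x + y) <= p x + p y) ->
  (forall g, linear_functional g -> (forall x, sabs (g x) <= p x) ->
     exists M, forall n, sabs (g (z n)) <= M) ->
  exists M, forall n, p (z n) <= M.
Proof.
move=> pZ pD wb; apply: (@weakly_bounded_seminorm_bounded _ (restrict_scalars X emb)).
- by move=> r x; rewrite restrict_scalarsE pZ sabs_emb.
- exact: pD.
move=> u lu up; have [g [lg gp ug]] := lift pZ lu up.
by have [M gM] := wb g lg gp; exists M => n; exact: le_trans (ug _) (gM n).
Qed.

Lemma fine_ext_seminorm (sig : X -> \bar R) :
  ext_seminorm sabs sig -> (forall x, (sig x < +oo)%E) ->
  [/\ forall x, sig x = (fine (sig x))%:E,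
      forall a x, fine (sig (a *: x)) = sabs a * fine (sig x) &
      forall x y, fine (sig (x + y)) <= fine (sig x) + fine (sig y)].
Proof.
move=> [sig0 sigZ sigD] sig_fin.
have sE x : sig x = (fine (sig x))%:E.
  by have := sig0 x; have := sig_fin x; case: (sig x).
split => // [a x|x y]; first by rewrite sigZ [sig x]sE.
by have := sigD x y; rewrite [sig (x + y)]sE [sig x]sE [sig y]sE -EFinD lee_fin.
Qed.

Section Topologies.
Variables (I : Type) (rho : I -> X -> \bar R) (nrm : X -> R).
Hypotheses (rho_semi : forall i, ext_seminorm sabs (rho i)) (nrm_norm : is_norm sabs nrm)
  (dual : forall f : X -> K, linear_functional f ->
     (continuous_wrt sabs (norm_topology nrm) f <->
      continuous_wrt sabs (family_topology rho) f)).

Let nrm_ge0 x : 0 <= nrm x. Proof. by case: nrm_norm. Qed.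
Let nrm_eq0 x : nrm x = 0 -> x = 0. Proof. by case: nrm_norm => _ + _ _; apply. Qed.
Let nrmZ a x : nrm (a *: x) = sabs a * nrm x. Proof. by case: nrm_norm. Qed.
Let nrmD x y : nrm (x + y) <= nrm x + nrm y. Proof. by case: nrm_norm. Qed.
Let nrm0 : nrm 0 = 0. Proof. exact: abs_homogeneous0 nrmZ. Qed.

Definition rho_ball (J : set I) (e : R) := [set x | forall i, J i -> (rho i x < e%:E)%E].

Lemma rho_ballZ J e t x : 0 < t -> rho_ball J e x -> rho_ball J (t * e) (emb t *: x).
Proof.
move=> t0 xJ i /xJ; have [rho0 rhoZ _] := rho_semi i.
rewrite rhoZ sabs_emb gtr0_norm //; move: (rho0 x); case: (rho i x) => // r _.
by rewrite -EFinM !lte_fin ltr_pM2l.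
Qed.

Lemma nested_ball_base : countable_nbhd_base_at0 (family_topology rho) ->
  exists (J : nat -> set I) (e : nat -> R),
    [/\ forall n, finite_set (J n), forall n, 0 < e n &
        forall N, nbhd_of (family_topology rho) 0 N ->
          exists m, forall n, (m <= n)%N -> rho_ball (J n) (e n) `<=` N].
Proof.
case=> B [Bnbhd Bbase].
have ball_in m : exists Je : set I * R,
    [/\ finite_set Je.1, 0 < Je.2 & rho_ball Je.1 Je.2 `<=` B m].
  have [U [rU U0 UB]] := Bnbhd m; have [J [e [fJ e0 sub]]] := rU 0 U0.
  exists (J, e); split => //; apply: subset_trans UB => x xJ.
  by apply: sub => i /xJ; rewrite subr0.
have [Je JeP] := choice ball_in.
pose J := fix J n := if n is n'.+1 then J n' `|` (Je n).1 else (Je 0%N).1.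
pose e := fix e n := if n is n'.+1 then Order.min (e n') (Je n).2 else (Je 0%N).2.
have nested m n : (m <= n)%N -> rho_ball (J n) (e n) `<=` rho_ball (Je m).1 (Je m).2.
  elim: n => [|n IH]; first by rewrite leqn0 => /eqP ->.
  rewrite leq_eqVlt => /orP[/eqP ->|/IH sub] x /= xJ.
    move=> i Ji; apply: lt_le_trans (xJ i (or_intror Ji)) _.
    by rewrite lee_fin ge_min lexx orbT.
  apply: sub => i Ji; apply: lt_le_trans (xJ i (or_introl Ji)) _.
  by rewrite lee_fin ge_min lexx.
exists J, e; split.
- elim=> [|n IH] /=; first by case: (JeP 0%N).
  by rewrite finite_setU; split => //; case: (JeP n.+1).
- elim=> [|n IH] /=; first by case: (JeP 0%N).
  by rewrite lt_min IH; case: (JeP n.+1).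
- move=> N /Bbase[m BN]; exists m => n mn x /(nested _ _ mn) xm.
  by apply: BN; case: (JeP m) => _ _; apply.
Qed.

Lemma norm_continuous_at0 : countable_nbhd_base_at0 (family_topology rho) ->
  exists J d, [/\ finite_set J, 0 < d & rho_ball J d `<=` [set x | nrm x < 1]].
Proof.
move=> /nested_ball_base[J [e [fJ e0 base]]]; apply: contrapT => nc.
have bad n : exists x, rho_ball (J n) (e n / n.+1%:R) x /\ 1 <= nrm x.
  apply: contrapT => nx; apply: nc; exists (J n), (e n / n.+1%:R).
  split=> // [|x xJ]; first by rewrite divr_gt0.
  by rewrite /= ltNge; apply/negP => x1; apply: nx; exists x.
have [xs xsP] := choice bad.
pose y n := emb n.+1%:R *: xs n.
have y_ball n : rho_ball (J n) (e n) (y n).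
  by have := rho_ballZ (ltr0Sn _ n) (xsP n).1; rewrite mulrC divfK ?pnatr_eq0.
have y_big n : n.+1%:R <= nrm (y n).
  by rewrite nrmZ sabs_emb gtr0_norm // -{1}[n.+1%:R]mulr1 ler_pM2l //; case: (xsP n).
apply: (natS_le_unbounded y_big).
apply: (weakly_bounded_bounded nrmZ nrmD) => g lg gn.
have gc := dominated_continuous lg nrm0 (norm_topology_ball nrmD) gn.
have [U [rU U0 gU]] := (dual lg).1 gc 0 1 ltr01.
have [m sub] := base U (ex_intro _ U (And3 rU U0 (@subset_refl _ U))).
apply: (@eventually_bounded _ _ m 1) => n /sub /(_ _ (y_ball n)) /gU.
by rewrite linear_functional0 // subr0 => /ltW.
Qed.

Lemma norm_topology_sub :
  (exists J d, [/\ finite_set J, 0 < d & rho_ball J d `<=` [set x | nrm x < 1]]) ->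
  norm_topology nrm `<=` family_topology rho.
Proof.
move=> [J [d [fJ d0 Jd1]]] U nU x0 /nU[eps [e0 sub]].
exists J, (eps * d); split=> // [|x xJ]; first by rewrite mulr_gt0.
have ie0 : 0 < eps^-1 by rewrite invr_gt0.
have : rho_ball J (eps^-1 * (eps * d)) (emb eps^-1 *: (x - x0)) by exact: rho_ballZ.
rewrite mulKf ?gt_eqF // => /Jd1; rewrite /= nrmZ sabs_emb gtr0_norm // => lt1.
by apply: sub; rewrite /= -(ltr_pM2l ie0) mulVf ?gt_eqF.
Qed.

Lemma seminorm_le_norm (s : X -> R) :
  (forall a x, s (a *: x) = sabs a * s x) -> (forall x y, s (x + y) <= s x + s y) ->
  (forall g, linear_functional g -> (forall x, sabs (g x) <= s x) ->
     continuous_wrt sabs (norm_topology nrm) g) ->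
  exists C, forall x, s x <= C * nrm x.
Proof.
move=> sZ sD s_cont; apply: contrapT => /forallNP nC.
have bad n : exists x, n.+1%:R * nrm x < s x.
  by have /existsNP[x /negP] := nC n.+1%:R; rewrite -ltNge; exists x.
have [ys ysP] := choice bad.
have ys_pos n : 0 < nrm (ys n).
  rewrite lt_def nrm_ge0 andbT; apply/eqP => /[dup] /nrm_eq0 y0.
  by move: (ysP n); rewrite y0 (abs_homogeneous0 sZ) nrm0 mulr0 ltxx.
pose z n := emb (nrm (ys n))^-1 *: ys n.
have z1 n : nrm (z n) = 1.
  by rewrite nrmZ sabs_emb gtr0_norm ?invr_gt0 // mulVf ?gt_eqF.
have z_big n : n.+1%:R <= s (z n).
  rewrite sZ sabs_emb gtr0_norm ?invr_gt0 // -(ler_pM2l (ys_pos n)) mulrA.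
  by rewrite mulfV ?gt_eqF // mul1r mulrC ltW.
apply: (natS_le_unbounded z_big).
apply: (weakly_bounded_bounded sZ sD) => g lg gs.
have [C gC] := continuous_bounded nrmZ lg (s_cont g lg gs).
by exists C => n; apply: gC; rewrite z1.
Qed.

Lemma finest_sub_norm_topology (tauF : set (set X)) :
  finest_lc_topology sabs (family_topology rho) tauF -> tauF `<=` norm_topology nrm.
Proof.
case=> -[J [sig [sig_semi sig_fin ->]] sig_rho _].
have sig_bound j : exists C, forall x, fine (sig j x) <= C * nrm x.
  have [sE sZ sD] := fine_ext_seminorm (sig_semi j) (sig_fin j).
  apply: (seminorm_le_norm sZ sD) => g lg gs; apply/(dual lg).
  apply: continuous_wrtS sig_rho _.
  exact: dominated_continuous lg (abs_homogeneous0 sZ) (family_topology_ball sE sD) gs.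
have [C CP] := choice sig_bound.
move=> U sigU x0 /sigU[J0 [eps [fJ0 e0 sub]]].
have [M MC] := finite_set_ubound C fJ0.
have M1 : 0 < `|M| + 1 by rewrite ltr_pwDr.
exists (eps / (`|M| + 1)); split=> [|x px]; first by rewrite divr_gt0.
apply: sub => j Jj; have [sE _ _] := fine_ext_seminorm (sig_semi j) (sig_fin j).
rewrite sE lte_fin; apply: le_lt_trans (CP j _) _.
have : C j * nrm (x - x0) <= (`|M| + 1) * nrm (x - x0).
  by rewrite ler_wpM2r // (le_trans (MC j Jj)) // (le_trans (ler_norm M)) // lerDl.
by move/le_lt_trans; apply; rewrite mulrC -ltr_pdivlMr.
Qed.

Theorem finest_lc_topology_norm (tauF : set (set X)) :
  countable_nbhd_base_at0 (family_topology rho) ->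
  finest_lc_topology sabs (family_topology rho) tauF -> tauF = norm_topology nrm.
Proof.
move=> base tauF_fin; apply/seteqP; split; first exact: finest_sub_norm_topology.
case: tauF_fin => _ _; apply; first exact: lc_norm_topology.
exact/norm_topology_sub/norm_continuous_at0.
Qed.

End Topologies.
End Space.
End Scalars.

Theorem theorem5p16 (R : realType) :
  (* real scalars *)
  (forall (X : lmodType R) (I : Type) (rho : I -> X -> \bar R)
          (tauF : set (set X)) (nrm : X -> R),
     (forall i, ext_seminorm Num.norm (rho i)) ->
     hausdorff_topology (family_topology rho) ->
     countable_nbhd_base_at0 (family_topology rho) ->
     finest_lc_topology Num.norm (family_topology rho) tauF ->
     is_norm Num.norm nrm ->
     (forall f : X -> R, linear_functional f ->
        (continuous_wrt Num.norm (norm_topology nrm) f <->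
         continuous_wrt Num.norm (family_topology rho) f)) ->
     tauF = norm_topology nrm)
  /\
  (* complex scalars *)
  (forall (X : lmodType R[i]) (I : Type) (rho : I -> X -> \bar R)
          (tauF : set (set X)) (nrm : X -> R),
     (forall i, ext_seminorm cabs (rho i)) ->
     hausdorff_topology (family_topology rho) ->
     countable_nbhd_base_at0 (family_topology rho) ->
     finest_lc_topology cabs (family_topology rho) tauF ->
     is_norm cabs nrm ->
     (forall f : X -> R[i], linear_functional f ->
        (continuous_wrt cabs (norm_topology nrm) f <->
         continuous_wrt cabs (family_topology rho) f)) ->
     tauF = norm_topology nrm).
Proof.
split=> X I rho tauF nrm rho_semi _ base tauF_fin nrm_norm dual.
- apply: (finest_lc_topology_norm (emb := idfun)) base tauF_fin => //.
  + exact: normrM.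
  + exact: real_lifts_real_functionals.
- apply: (finest_lc_topology_norm (emb := real_complex R)) base tauF_fin => //.
  + by move=> r; rewrite /cabs /= expr0n addr0 sqrtr_sqr.
  + exact: ComplexField.Normc.normcM.
  + exact: complex_lifts_real_functionals.
Qed.
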